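(* Let $n\ge2$ and let $M\subset\mathbb{C}^n\times\mathbb{R}$ be given by $$s=\sum_{j=1}^a|z_j|^2-\sum_{j=a+1}^{a+b}|z_j|^2+B(z,z)+\overline{B(z,z)}=Q(z,\bar z),$$ where $a\ge2$, $a+b\le n$, $B$ is a complex bilinear form, and the real quadratic form $Q$ is nondegenerate. Write $A(z,\bar z)=\sum_{j=1}^a|z_j|^2-\sum_{j=a+1}^{a+b}|z_j|^2$. Suppose $f(z,\bar z)$ is a polynomial such that, considered as a function on $M$ parametrized by $z$, $f$ is a CR function on $M_{CR}$. Then there exists a polynomial $F(z,s)$ such that $$f(z,\bar z)=F\big(z,A(z,\bar z)+B(z,z)+\overline{B(z,z)}\big).$$ Furthermore, if $f$ is homogeneous of degree $d$, then $F$ is weighted homogeneous of degree $d$, i.e. $F(z,s)=\sum_{j+2k=d}P_j(z)s^k$ with each $P_j$ a homogeneous polynomial of degree $j$.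
   Context: $M_{CR}$ is the set of points $p\in M$ where $\dim_{\mathbb{C}}\big((\mathbb{C}\otimes T_pM)\cap\operatorname{span}\{\partial/\partial\bar z_1,\dots,\partial/\partial\bar z_n\}\big)=n-1$; $f$ is CR on $M_{CR}$ if it is annihilated by all vector fields on $M_{CR}$ with values in this space. *)

From HB Require Import structures.
From mathcomp Require Import all_boot all_order all_algebra.
From mathcomp Require Import reals.
From mathcomp Require Import complex.
From mathcomp Require Import mpoly.
Set Implicit Arguments. Unset Strict Implicit. Unset Printing Implicit Defensive.
Import Order.TTheory GRing.Theory Num.Theory.
Local Open Scope ring_scope.
Local Open Scope complex_scope.

Section CRDefs.
Variable R : realType.
Local Notation C := (R[i]).
Variable n : nat.

(* Variables of polynomials in (z, zbar): 'I_(n+n); z_j = lshift, zbar_j = rshift *)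
Definition zv (j : 'I_n) : 'I_(n + n) := lshift n j.
Definition zbv (j : 'I_n) : 'I_(n + n) := rshift n j.

Definition zzbar (z : 'rV[C]_n) : 'I_(n + n) -> C :=
  fun i => match split i with inl j => z 0 j | inr j => (z 0 j)^* end.

Definition Apoly (a b : nat) : {mpoly C[n + n]} :=
  \sum_(j < n | (j < a)%N) ('X_(zv j) * 'X_(zbv j))
  - \sum_(j < n | (a <= j < a + b)%N) ('X_(zv j) * 'X_(zbv j)).

Definition Bpoly (beta : 'M[C]_n) : {mpoly C[n + n]} :=
  \sum_(j < n) \sum_(k < n) (beta j k *: ('X_(zv j) * 'X_(zv k))).

Definition Bbarpoly (beta : 'M[C]_n) : {mpoly C[n + n]} :=
  \sum_(j < n) \sum_(k < n) ((beta j k)^* *: ('X_(zbv j) * 'X_(zbv k))).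

Definition Qpoly (a b : nat) (beta : 'M[C]_n) : {mpoly C[n + n]} :=
  Apoly a b + Bpoly beta + Bbarpoly beta.

Definition Qfun a b beta (z : 'rV[C]_n) : C := (Qpoly a b beta).@[zzbar z].

(* nondegeneracy of the real quadratic form Q on C^n = R^(2n):
   the radical of its polar (R-bilinear) form is trivial *)
Definition nondegenerate_Q a b beta : Prop :=
  forall w : 'rV[C]_n,
    (forall z : 'rV[C]_n, Qfun a b beta (z + w) - Qfun a b beta z - Qfun a b beta w = 0) ->
    w = 0.

(* M = {(z, w) in C^n x C : Im w = 0, Re w = Q(z,zbar)} in C^(n+1), coordinates
   (z_1..z_n, w) indexed by 'I_(n+1).  Defining functions rho1 = Im w,
   rho2 = Re w - Q(z,zbar).  Column k of [dbar_rho] is the vector of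
   (d rho_k / d zbar_1, ..., d rho_k / d zbar_n, d rho_k / d wbar) at (z, Q z):
   d(Im w)/d wbar = i/2, d(Re w)/d wbar = 1/2. *)
Definition dbar_rho a b beta (z : 'rV[C]_n) : 'M[C]_(n + 1, 2) :=
  \matrix_(i < n + 1, k < 2)
    match split i with
    | inl j => if k == 0 then 0
               else - ((Qpoly a b beta)^`M(zbv j)).@[zzbar z]
    | inr _ => if k == 0 then 'i / 2%:R else 1 / 2%:R
    end.

(* (C (x) T_pM) cap span{d/dzbar_1,..,d/dzbar_n, d/dwbar} at p = (z, Q z) is the
   space of u : 'rV_(n+1) with u *m dbar_rho = 0, i.e. the row space of kermx. *)
Definition in_MCR a b beta (z : 'rV[C]_n) : Prop :=
  \rank (kermx (dbar_rho a b beta z)) = n.-1.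

(* f (polynomial in z, zbar, viewed on M via z, extended independently of w)
   is annihilated by every (0,1) vector tangent to M at every point of M_CR *)
Definition CR_on_MCR a b beta (f : {mpoly C[n + n]}) : Prop :=
  forall z : 'rV[C]_n, in_MCR a b beta z ->
  forall u : 'rV[C]_(n + 1), u *m dbar_rho a b beta z = 0 ->
    \sum_(j < n) u 0 (lshift 1 j) * (f^`M(zbv j)).@[zzbar z] = 0.

Definition zQ a b beta (z : 'rV[C]_n) : 'I_(n + 1) -> C :=
  fun i => match split i with inl j => z 0 j | inr _ => Qfun a b beta z end.

Definition weighted_homog (d : nat) (F : {mpoly C[n + 1]}) : Prop :=
  forall m, m \in msupp F ->
    (\sum_(j < n) m (lshift 1 j) + 2 * m (rshift n (ord0 : 'I_1)))%N = d.

End CRDefs.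

(* On M_CR the CR condition says that the dbar-gradient of f is parallel to that
   of Q, f_{zbar_j} Q_{zbar_k} = f_{zbar_k} Q_{zbar_j}, at every point where some
   Q_{zbar_l} is nonzero, and trivially elsewhere; since (z, conj z) sweeps a
   totally real subspace of full dimension, this is an identity of polynomials in
   the independent variables z, zbar.  As a >= 2, Q_{zbar_0} = z_0 + (terms in zbar)
   and Q_{zbar_1} = z_1 + (terms in zbar) are coprime, so f_{zbar_j} = l Q_{zbar_j}
   for a single polynomial l, whose dbar-gradient is again parallel to that of Q
   and whose degree is smaller.  By induction l = G(z, Q); if H is an antiderivative
   of G in s, then f - H(z, Q) has no zbar-derivatives, so it is a polynomial in z.
   For f homogeneous of degree d only the part of F of weighted degree d
   contributes, because F |-> F(z, Q) maps weighted degree d to degree d. *)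

From HB Require Import structures.
From mathcomp Require Import all_boot all_order all_algebra.
From mathcomp Require Import reals complex mpoly.
From mathcomp Require Import ring zify.
Set Implicit Arguments. Unset Strict Implicit. Unset Printing Implicit Defensive.
Import Order.TTheory GRing.Theory Num.Theory.
Local Open Scope ring_scope.

Lemma split_lshift m k (j : 'I_m) : split (lshift k j) = inl j.
Proof. exact: (unsplitK (inl _)). Qed.

Lemma split_rshift m k (j : 'I_k) : split (rshift m j) = inr j.
Proof. exact: (unsplitK (inr _)). Qed.

Lemma sum_delta_mull (K : ringType) k (j : 'I_k) (c : K) (F : 'I_k -> K) :
  \sum_(l < k) (if l == j then c else 0) * F l = c * F j.
Proof. by rewrite (bigD1 j) //= eqxx big1 ?addr0 // => l /negPf ->; rewrite mul0r. Qed.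

Section MPolyRing.
Variables (R : ringType) (k : nat).
Implicit Types (p : {mpoly R[k]}).

Lemma mpoly_ring_ind (P : {mpoly R[k]} -> Prop) :
  (forall c, P c%:MP) -> (forall i, P 'X_i) ->
  (forall p q, P p -> P q -> P (p + q)) -> (forall p q, P p -> P q -> P (p * q)) ->
  forall p, P p.
Proof.
move=> PC PX PD PM p; rewrite (mpolyE p); apply: big_ind => [|//|m _].
  by rewrite -mpolyC0.
rewrite -mul_mpolyC mpolyXE_id; apply: (PM) => //.
apply: big_ind => [|//|i _]; first by rewrite -mpolyC1.
by elim: (m i) => [|e IHe]; rewrite ?expr0 -?mpolyC1 // exprS; apply: (PM).
Qed.

Lemma mderivXU (i j : 'I_k) : ('X_j : {mpoly R[k]})^`M(i) = (j == i)%:R%:MP.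
Proof.
rewrite mderivX mnm1E; case: eqP => [->|_]; last by rewrite scale0r mpolyC0.
by rewrite -{1}[U_(i)%MM]add0m addmK mpolyX0 scale1r mpolyC1.
Qed.

Lemma msize_mderiv p i : (msize p^`M(i) <= (msize p).-1)%N.
Proof.
rewrite [X in (X <= _)%N]msizeE; apply/bigmax_leqP_seq => m.
rewrite mcoeff_msupp mcoeff_mderiv => m_supp _.
have : (m + U_(i))%MM \in msupp p.
  by rewrite mcoeff_msupp; apply: contraNneq m_supp => ->; rewrite mul0rn.
by move/msize_mdeg_lt; rewrite mdegD mdeg1 addn1 -ltn_predRL.
Qed.

End MPolyRing.

Section MPolyComRing.
Variable R : comRingType.

Lemma comp_mpolyA k l m (p : {mpoly R[k]}) (L : k.-tuple {mpoly R[l]})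
    (M : l.-tuple {mpoly R[m]}) :
  (p \mPo L) \mPo M = p \mPo [tuple tnth L i \mPo M | i < k].
Proof.
elim/mpoly_ring_ind: p => [c|i|p q Hp Hq|p q Hp Hq].
- by rewrite !comp_mpolyC.
- by rewrite !comp_mpolyXU -!tnth_nth tnth_map tnth_ord_tuple.
- by rewrite !comp_mpolyD Hp Hq.
- by rewrite !rmorphM /= Hp Hq.
Qed.

Lemma mderiv_comp_mpoly k l (T : k.-tuple {mpoly R[l]}) (H : {mpoly R[k]}) i :
  (H \mPo T)^`M(i) = \sum_(t < k) (H^`M(t) \mPo T) * (tnth T t)^`M(i).
Proof.
elim/mpoly_ring_ind: H => [c|j|p q Hp Hq|p q Hp Hq].
- rewrite comp_mpolyC mderivC big1 // => t _.
  by rewrite mderivC comp_mpoly0 mul0r.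
- rewrite comp_mpolyXU -tnth_nth (bigD1 j) //= mderivXU eqxx comp_mpolyC mul1r.
  rewrite big1 ?addr0 // => t /negPf ne_tj.
  by rewrite mderivXU eq_sym ne_tj comp_mpolyC mul0r.
- rewrite comp_mpolyD !mderivD Hp Hq -big_split /=.
  by apply: eq_bigr => t _; rewrite mderivD comp_mpolyD mulrDl.
- rewrite rmorphM mderivM Hp Hq mulr_suml mulr_sumr -big_split /=.
  apply: eq_bigr => t _; rewrite mderivM comp_mpolyD !rmorphM /=.
  by rewrite mulrDl mulrAC mulrA.
Qed.

Lemma comp_mpoly_subX_factor k (i : 'I_k) (S : k.-tuple {mpoly R[k]}) :
  (forall j, j != i -> tnth S j = 'X_j) ->
  forall p, exists r, p - (p \mPo S) = ('X_i - tnth S i) * r.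
Proof.
move=> SX; elim/mpoly_ring_ind => [c|j|p q [r1 E1] [r2 E2]|p q [r1 E1] [r2 E2]].
- by exists 0; rewrite comp_mpolyC subrr mulr0.
- rewrite comp_mpolyXU -tnth_nth; have [->|ne_ji] := eqVneq j i.
    by exists 1; rewrite mulr1.
  by exists 0; rewrite (SX j ne_ji) subrr mulr0.
- by exists (r1 + r2); rewrite comp_mpolyD mulrDr -E1 -E2 opprD addrACA.
- exists (r1 * q + (p \mPo S) * r2).
  by rewrite rmorphM /= mulrDr mulrA -E1 mulrCA -E2 mulrBl mulrBr addrA subrK.
Qed.

End MPolyComRing.

Local Notation widen := (widen_ord (leqnSn _)).

Section MPolyNum.
Variable K : numDomainType.

Lemma mderiv_eq0_supp k (p : {mpoly K[k]}) i :
  p^`M(i) = 0 -> {in msupp p, forall m : 'X_{1..k}, m i = 0%N}.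
Proof.
move=> dp0 m m_supp; apply/eqP; rewrite -leqn0 leqNgt; apply/negP => mi_gt0.
have mE : m = ((m - U_(i)) + U_(i))%MM.
  rewrite submK //; apply/mnm_lepP => j.
  by rewrite mnm1E; case: eqP => // <-.
have := mcoeff_mderiv i p (m - U_(i)); rewrite -mE dp0 mcoeff0 => /esym/eqP.
by rewrite mulrn_eq0 /= mcoeff_eq0 m_supp.
Qed.

Lemma poly_natr_roots0 (q : {poly K}) : (forall j : nat, q.[j%:R] = 0) -> q = 0.
Proof.
move=> q_nat0; apply/eqP/negPn/negP => q_neq0.
pose s := [seq j%:R | j <- iota 0 (size q)] : seq K.
have s_roots : all (root q) s by apply/allP => _ /mapP[j _ ->]; apply/rootP.
have s_uniq : uniq s.
  by rewrite map_inj_uniq ?iota_uniq // => ? ? /eqP; rewrite eqr_nat => /eqP.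
by have := max_poly_roots q_neq0 s_roots s_uniq; rewrite size_map size_iota ltnn.
Qed.

Lemma meval_muni k (p : {mpoly K[k.+1]}) (v : 'I_k.+1 -> K) :
  p.@[v] = (map_poly (meval (v \o widen)) (muni p)).[v ord_max].
Proof.
rewrite muniE mevalE raddf_sum horner_sum /=; apply: eq_bigr => m _.
rewrite map_polyZ hornerZ map_polyXn hornerXn /= mevalZ mevalX big_ord_recr /= mulrA.
by congr (_ * _ * _); apply: eq_bigr => i _; rewrite mnmE.
Qed.

Lemma mcoeff_muni k (p : {mpoly K[k.+1]}) m :
  p@_m = ((muni p)`_(m ord_max))@_[multinom m (widen i) | i < k].
Proof.
rewrite muniE coef_sum raddf_sum {1}[p]mpolyE raddf_sum /=.
apply: eq_bigr => m' _; rewrite coefZ coefXn mulr_natr mcoeffMn !mcoeffZ !mcoeffX.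
have [eq_max|ne_max] := eqVneq (m' ord_max) (m ord_max); last first.
  rewrite mulr0n; have [mm'|_] := eqVneq m' m; last by rewrite mulr0.
  by rewrite mm' eqxx in ne_max.
rewrite mulr1n; congr (_ * (nat_of_bool _)%:R).
apply/idP/idP => [/eqP -> //|/eqP eq_widen]; apply/eqP/mnmP => i.
case: (unliftP ord_max i) => [j ->|->] //.
have := congr1 (fun m0 : 'X_{1..k} => m0 j) eq_widen; rewrite !mnmE.
by have -> : lift ord_max j = widen j by apply/val_inj; rewrite /= /bump leqNgt ltn_ord.
Qed.

Lemma mpoly_natr_roots0 k (p : {mpoly K[k]}) :
  (forall r : 'I_k -> nat, p.@[fun i => (r i)%:R] = 0) -> p = 0.
Proof.
elim: k p => [|k IHk] p p_nat0.
  have := p_nat0 (fun _ => 0%N); rewrite (@msize1_polyC _ _ p) ?mevalC => [->|].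
    by rewrite mpolyC0.
  by rewrite msizeE; apply/bigmax_leqP_seq => m _ _; rewrite mdegE big_ord0.
have muni0 : muni p = 0.
  apply/polyP => l; rewrite coef0; apply: IHk => r.
  pose v (x : nat) (i : 'I_k.+1) := if unlift ord_max i is Some j then r j else x.
  have eval0 : map_poly (meval (fun i => (r i)%:R)) (muni p) = 0.
    apply: poly_natr_roots0 => x; have := p_nat0 (v x).
    rewrite meval_muni /v unlift_none => <-; congr (_.[_]).
    apply: eq_map_poly => g; apply: meval_eq => i /=.
    have -> : widen i = lift ord_max i by apply/val_inj; rewrite /= /bump leqNgt ltn_ord.
    by rewrite liftK.
  by have := congr1 (fun g : {poly K} => g`_l) eval0; rewrite coef_map coef0.
by apply/mpolyP => m; rewrite mcoeff_muni muni0 coef0 !mcoeff0.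
Qed.

End MPolyNum.

Section MPolyAntideriv.
Variables (K : numFieldType) (k : nat) (i : 'I_k).

Definition mantideriv (G : {mpoly K[k]}) : {mpoly K[k]} :=
  \sum_(m <- msupp G) (G@_m / (m i).+1%:R) *: 'X_[m + U_(i)].

Lemma mantiderivK G : (mantideriv G)^`M(i) = G.
Proof.
rewrite raddf_sum /= [RHS]mpolyE; apply: eq_bigr => m _.
rewrite mderivZ mderivX addmK scalerA mnmDE mnm1E eqxx addn1.
by rewrite mulfVK // pnatr_eq0.
Qed.

End MPolyAntideriv.

Section RealCoordinates.
Local Open Scope complex_scope.
Variables (R : realType) (n : nat).
Local Notation C := R[i].
Local Notation P := {mpoly C[n + n]}.

(* The variables zv j and zbv j double as the real coordinates x_j and y_j,
   with z_j = x_j + i y_j. *)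
Definition zzbar_of_xy : (n + n).-tuple P :=
  [tuple match split i with
         | inl j => 'X_(zv j) + 'i *: 'X_(zbv j)
         | inr j => 'X_(zv j) - 'i *: 'X_(zbv j) end | i < n + n].

Definition xy_of_zzbar : (n + n).-tuple P :=
  [tuple match split i with
         | inl j => 2^-1 *: ('X_(zv j) + 'X_(zbv j))
         | inr j => (- 'i / 2) *: ('X_(zv j) - 'X_(zbv j)) end | i < n + n].

Lemma zzbar_of_xyK :
  [tuple tnth zzbar_of_xy i \mPo xy_of_zzbar | i < n + n] = [tuple 'X_i | i < n + n].
Proof.
have ii2 : 'i * (- 'i / 2) = 2^-1 :> C by rewrite mulrA mulrN -expr2 sqr_i opprK mul1r.
have x_zv j : tnth xy_of_zzbar (zv j) = 2^-1 *: ('X_(zv j) + 'X_(zbv j)).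
  by rewrite tnth_map tnth_ord_tuple split_lshift.
have y_zbv j : tnth xy_of_zzbar (zbv j) = (- 'i / 2) *: ('X_(zv j) - 'X_(zbv j)).
  by rewrite tnth_map tnth_ord_tuple split_rshift.
have half2 (X : P) : 2^-1 *: (X *+ 2) = X.
  by rewrite -scalerMnr scalerMnl -mulr_natr mulVf ?scale1r ?pnatr_eq0.
apply: eq_from_tnth => i; rewrite !tnth_map !tnth_ord_tuple.
case: (split_ordP i) => j -> /=; rewrite ?split_lshift ?split_rshift.
- rewrite comp_mpolyD comp_mpolyZ !comp_mpolyXU -!tnth_nth x_zv y_zbv scalerA ii2.
  by rewrite -scalerDr addrACA subrr addr0 -mulr2n half2.
- rewrite comp_mpolyB comp_mpolyZ !comp_mpolyXU -!tnth_nth x_zv y_zbv scalerA ii2.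
  by rewrite -scalerBr opprB addrC addrA subrK -mulr2n half2.
Qed.

Lemma mpoly_zzbar_eq0 (p : P) : (forall z : 'rV[C]_n, p.@[zzbar z] = 0) -> p = 0.
Proof.
move=> p_zzbar0; have conj_i : 'i^* = - 'i :> C by apply/eqP; simpc.
have pL0 : p \mPo zzbar_of_xy = 0.
  apply: mpoly_natr_roots0 => r; rewrite comp_mpoly_meval.
  pose z : 'rV[C]_n := \row_j ((r (zv j))%:R + 'i * (r (zbv j))%:R).
  rewrite -(p_zzbar0 z); apply: meval_eq => i.
  rewrite /zzbar tnth_map tnth_ord_tuple.
  case: (split i) => j; rewrite ?mevalB ?mevalD mevalZ !mevalXU mxE //.
  by rewrite -mulNr -conj_i rmorphD rmorphM !rmorph_nat.
by rewrite -[p]comp_mpoly_id -zzbar_of_xyK -comp_mpolyA pL0 comp_mpoly0.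
Qed.

End RealCoordinates.

Section CRPoints.
Local Open Scope complex_scope.
Variables (R : realType) (n a b : nat) (beta : 'M[R[i]]_n).
Local Notation C := R[i].
Local Notation dQ j := ((Qpoly a b beta)^`M(zbv j)).

Lemma rank_dbar_rho (z : 'rV[C]_n) (l : 'I_n) :
  (dQ l).@[zzbar z] != 0 -> \rank (dbar_rho a b beta z) = 2%N.
Proof.
set A := dbar_rho a b beta z; set c := (dQ l).@[zzbar z] => c_neq0.
apply/eqP; rewrite eqn_leq rank_leq_col /=.
pose rows (x : 'I_2) : 'I_(n + 1) := if x == 0 then lshift 1 l else rshift n ord0.
(* Ainv inverts the 2 x 2 block of dbar_rho in the rows of zbar_l and wbar. *)
pose Ainv : 'M[C]_2 := \matrix_(r, s)
  if r == 0 then (if s == 0 then - 'i / c else - (2 * 'i)) else (if s == 0 then - c^-1 else 0).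
have AinvK : Ainv *m rowsub rows A = 1%:M.
  apply/matrixP => r s; rewrite !mxE big_ord_recl big_ord1 !mxE /rows /=.
  rewrite split_lshift split_rshift /= -/c.
  have ii : 'i * 'i = -1 :> C by rewrite -expr2 sqr_i.
  case: r => [[|[|//]] ?]; case: s => [[|[|//]] ?] /=; rewrite ?mxE /=.
  - have -> : - 'i / c * 0 + - (2 * 'i) * ('i / 2) = - ('i * 'i) * (2 / 2) by ring.
    by rewrite ii opprK mul1r divff // pnatr_eq0.
  - have -> : - 'i / c * - c + - (2 * 'i) * (1 / 2) = 'i * (c / c) - 'i * (2 / 2) by ring.
    by rewrite !divff ?pnatr_eq0 // subrr.
  - by rewrite mulr0 mul0r addr0.
  - by rewrite mul0r addr0 mulNr mulrN opprK mulVf.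
have := mxrankM_maxr Ainv (rowsub rows A); rewrite AinvK mxrank1 => /leq_trans.
by apply; rewrite rowsubE mxrankM_maxr.
Qed.

Lemma in_MCR_dbarQ (z : 'rV[C]_n) (l : 'I_n) :
  (dQ l).@[zzbar z] != 0 -> in_MCR a b beta z.
Proof.
by move=> /rank_dbar_rho rank2; rewrite /in_MCR mxrank_ker rank2 addn1 subSS subn1.
Qed.

Lemma CR_on_MCR_cross (f : {mpoly C[n + n]}) : CR_on_MCR a b beta f ->
  forall z j k, (f^`M(zbv j) * dQ k - f^`M(zbv k) * dQ j).@[zzbar z] = 0.
Proof.
move=> f_CR z j k; rewrite mevalB !mevalM.
set qj := (dQ j).@[zzbar z]; set qk := (dQ k).@[zzbar z].
have [/andP[/eqP -> /eqP ->]|] := boolP ((qj == 0) && (qk == 0)).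
  by rewrite !mulr0 subrr.
rewrite negb_and => /orP q_neq0.
have z_CR : in_MCR a b beta z by case: q_neq0 => /in_MCR_dbarQ.
pose u : 'rV[C]_(n + 1) := \row_i
  if split i is inl l then (if l == j then qk else 0) - (if l == k then qj else 0) else 0.
have u_tangent : u *m dbar_rho a b beta z = 0.
  apply/rowP => c; rewrite !mxE big_split_ord /= big_ord1 !mxE split_rshift mul0r addr0.
  under eq_bigr do rewrite !mxE split_lshift.
  case: (c == 0); first by rewrite big1 // => l _; rewrite mulr0.
  under eq_bigr do rewrite mulrBl.
  by rewrite sumrB !sum_delta_mull !mulrN (mulrC qk) subrr.
have := f_CR z z_CR u u_tangent.
under eq_bigr do rewrite mxE split_lshift mulrBl.
by rewrite sumrB !sum_delta_mull (mulrC qk) (mulrC qj).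
Qed.

End CRPoints.

Section DbarQ.
Local Open Scope complex_scope.
Variables (R : realType) (n a b : nat) (beta : 'M[R[i]]_n).
Local Notation C := R[i].
Local Notation P := {mpoly C[n + n]}.
Local Notation Q := (Qpoly a b beta).
Local Notation dQ j := (Q^`M(zbv j)).

Lemma eq_zv_zbv (l j : 'I_n) : (zv l == zbv j) = false.
Proof. exact: eq_lrshift. Qed.

Lemma eq_zbv_zv (j l : 'I_n) : (zbv j == zv l) = false.
Proof. by rewrite eq_sym eq_zv_zbv. Qed.

Definition dBbar (j : 'I_n) : P := \sum_(l < n) \sum_(m < n)
  ((beta l m)^* *: ((l == j)%:R%:MP * 'X_(zbv m) + 'X_(zbv l) * (m == j)%:R%:MP)).

Lemma mderiv_Bbarpoly j : (Bbarpoly beta)^`M(zbv j) = dBbar j.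
Proof.
rewrite /dBbar raddf_sum /=; apply: eq_bigr => l _.
rewrite raddf_sum /=; apply: eq_bigr => m _.
by rewrite mderivZ mderivM !mderivXU !eq_rshift.
Qed.

Lemma mderiv_Bpoly j : (Bpoly beta)^`M(zbv j) = 0.
Proof.
rewrite raddf_sum big1 //= => l _; rewrite raddf_sum big1 //= => m _.
by rewrite mderivZ mderivM !mderivXU !eq_zv_zbv mpolyC0 mulr0 mul0r addr0 scaler0.
Qed.

Lemma mderiv_Apoly (j : 'I_n) : (j < a)%N -> (@Apoly R n a b)^`M(zbv j) = 'X_(zv j).
Proof.
move=> lt_ja.
have dsum (Pr : pred 'I_n) (F : 'I_n -> P) :
    (\sum_(l | Pr l) F l)^`M(zbv j) = \sum_(l | Pr l) (F l)^`M(zbv j).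
  exact: raddf_sum.
have dzz l : ('X_(zv l) * 'X_(zbv l) : P)^`M(zbv j) = 'X_(zv l) * (l == j)%:R%:MP.
  by rewrite mderivM !mderivXU eq_zv_zbv eq_rshift mpolyC0 mul0r add0r.
rewrite mderivB !dsum; under eq_bigr do rewrite dzz; under [X in _ - X]eq_bigr do rewrite dzz.
rewrite [X in _ - X]big1 ?subr0 => [|l /andP[le_al _]]; last first.
  have /negPf -> : l != j by apply: contraTneq le_al => ->; rewrite -ltnNge.
  by rewrite mpolyC0 mulr0.
rewrite (bigD1 j) //= eqxx mpolyC1 mulr1 big1 ?addr0 // => l /andP[_ /negPf ->].
by rewrite mpolyC0 mulr0.
Qed.

Lemma mderiv_Qpoly (j : 'I_n) : (j < a)%N -> dQ j = 'X_(zv j) + dBbar j.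
Proof.
move=> lt_ja; rewrite /Qpoly (mderivD _ (@Apoly R n a b + _)) (mderivD _ (@Apoly R n a b)).
by rewrite mderiv_Apoly // mderiv_Bpoly addr0 mderiv_Bbarpoly.
Qed.

Lemma comp_dBbar j (S : (n + n).-tuple P) :
  (forall l, tnth S (zbv l) = 'X_(zbv l)) -> dBbar j \mPo S = dBbar j.
Proof.
move=> S_zbv; rewrite raddf_sum /=; apply: eq_bigr => l _.
rewrite raddf_sum /=; apply: eq_bigr => m _.
by rewrite comp_mpolyZ rmorphD !rmorphM /= !comp_mpolyC !comp_mpolyXU -!tnth_nth !S_zbv.
Qed.

Lemma meval_dBbar j (v : 'I_(n + n) -> C) : (forall l, v (zbv l) = 0) -> (dBbar j).@[v] = 0.
Proof.
move=> v_zbv; rewrite raddf_sum big1 //= => l _; rewrite raddf_sum big1 //= => m _.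
by rewrite mevalZ mevalD !mevalM !mevalC !mevalXU !v_zbv mulr0 mul0r addr0 mulr0.
Qed.

Lemma msize_dQ_gt1 (j : 'I_n) : (j < a)%N -> (1 < msize (dQ j))%N.
Proof.
move=> lt_ja; rewrite ltnNge; apply/negP => /msize1_polyC dQ_const.
have dQ_eval (v : 'I_(n + n) -> C) : (forall l, v (zbv l) = 0) -> (dQ j).@[v] = v (zv j).
  by move=> v_zbv; rewrite mderiv_Qpoly // mevalD mevalXU meval_dBbar // addr0.
pose e i : C := (i == zv j)%:R; have e_zbv l : e (zbv l) = 0 by rewrite /e eq_zbv_zv.
have := dQ_eval e e_zbv; have := dQ_eval (fun=> 0) (fun=> erefl).
by rewrite dQ_const !mevalC => ->; rewrite /e eqxx => /eqP; rewrite eq_sym oner_eq0.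
Qed.

Lemma dQ_neq0 (j : 'I_n) : (j < a)%N -> dQ j != 0.
Proof. by move=> /msize_dQ_gt1; rewrite -msize_poly_eq0 -lt0n; apply: ltn_trans. Qed.

Lemma dQ_dvd (j k : 'I_n) (p r : P) : j != k -> (j < a)%N -> (k < a)%N ->
  p * dQ k = r * dQ j -> exists l, p = l * dQ j.
Proof.
(* Substituting z_j - Q_{zbar_j} for z_j kills Q_{zbar_j} but fixes Q_{zbar_k},
   so it kills p, which is therefore a multiple of Q_{zbar_j}. *)
move=> ne_jk lt_ja lt_ka pr_eq.
pose S : (n + n).-tuple P :=
  [tuple if i == zv j then 'X_(zv j) - dQ j else 'X_i | i < n + n].
have S_X i : i != zv j -> tnth S i = 'X_i.
  by move=> ne_i; rewrite tnth_map tnth_ord_tuple (negPf ne_i).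
have S_zv : tnth S (zv j) = 'X_(zv j) - dQ j by rewrite tnth_map tnth_ord_tuple eqxx.
have S_zbv l : tnth S (zbv l) = 'X_(zbv l) by rewrite S_X ?eq_zbv_zv.
have dQj_S : dQ j \mPo S = 0.
  rewrite [in LHS]mderiv_Qpoly // comp_mpolyD comp_mpolyXU -tnth_nth S_zv comp_dBbar //.
  by rewrite mderiv_Qpoly // opprD addrA subrr sub0r addNr.
have dQk_S : dQ k \mPo S = dQ k.
  have ne_zv : zv k != zv j by rewrite eq_lshift eq_sym.
  by rewrite mderiv_Qpoly // comp_mpolyD comp_mpolyXU -tnth_nth (S_X _ ne_zv) comp_dBbar.
have p_S : p \mPo S = 0.
  apply: (mulIf (dQ_neq0 lt_ka)); rewrite mul0r -dQk_S -rmorphM /= pr_eq rmorphM /=.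
  by rewrite dQj_S mulr0.
have [l pE] := comp_mpoly_subX_factor S_X p.
by exists l; rewrite mulrC; move: pE; rewrite p_S subr0 S_zv opprB addrC subrK.
Qed.

End DbarQ.

Section CompZQ.
Variables (R : realType) (n a b : nat) (beta : 'M[R[i]]_n).
Local Notation C := R[i].
Local Notation P := {mpoly C[n + n]}.
Local Notation Q := (Qpoly a b beta).
Local Notation dQ j := (Q^`M(zbv j)).

Definition zQ_tuple : (n + 1).-tuple P :=
  [tuple if split i is inl j then 'X_(zv j) else Q | i < n + 1].

Definition svar : 'I_(n + 1) := rshift n ord0.

Lemma zQ_tuple_z j : tnth zQ_tuple (lshift 1 j) = 'X_(zv j).
Proof. by rewrite tnth_map tnth_ord_tuple split_lshift. Qed.

Lemma zQ_tuple_s o : tnth zQ_tuple (rshift n o) = Q.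
Proof. by rewrite tnth_map tnth_ord_tuple split_rshift. Qed.

Lemma meval_comp_zQ (F : {mpoly C[n + 1]}) z :
  (F \mPo zQ_tuple).@[zzbar z] = F.@[zQ a b beta z].
Proof.
rewrite comp_mpoly_meval; apply: meval_eq => i.
case: (split_ordP i) => j ->; rewrite /zQ ?split_lshift ?split_rshift.
  by rewrite zQ_tuple_z mevalXU /zzbar split_lshift.
by rewrite zQ_tuple_s.
Qed.

Lemma mderiv_comp_zQ (H : {mpoly C[n + 1]}) j :
  (H \mPo zQ_tuple)^`M(zbv j) = (H^`M(svar) \mPo zQ_tuple) * dQ j.
Proof.
rewrite mderiv_comp_mpoly big_split_ord /= big_ord1 zQ_tuple_s big1 ?add0r // => l _.
by rewrite zQ_tuple_z mderivXU eq_lrshift mpolyC0 mulr0.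
Qed.

Lemma comp_zQ_of_holomorphic (g : P) :
  (forall j, g^`M(zbv j) = 0) -> exists h : {mpoly C[n + 1]}, g = h \mPo zQ_tuple.
Proof.
move=> g_hol.
pose zmon (m : 'X_{1..n + n}) : 'X_{1..n + 1} :=
  [multinom if split i is inl j then m (zv j) else 0%N | i < n + 1].
exists (\sum_(m <- msupp g) g@_m *: 'X_[zmon m]).
rewrite {1}[g]mpolyE raddf_sum /= big_seq [RHS]big_seq; apply: eq_bigr => m m_supp.
rewrite comp_mpolyZ comp_mpolyX; congr (_ *: _).
rewrite mpolyXE_id big_split_ord [RHS]big_split_ord /= big_ord1.
rewrite [X in _ * X = _]big1 ?mulr1 => [|l _]; last first.
  by rewrite (mderiv_eq0_supp (g_hol l) m_supp) expr0.
rewrite zQ_tuple_s mnmE split_rshift expr0 mulr1; apply: eq_bigr => l _.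
by rewrite zQ_tuple_z mnmE split_lshift.
Qed.

Definition dbar_parallel (f : P) : Prop :=
  forall j k, f^`M(zbv j) * dQ k = f^`M(zbv k) * dQ j.

Lemma comp_zQ_of_dbar_parallel (f : P) : (1 < n)%N -> (1 < a)%N ->
  dbar_parallel f -> exists F : {mpoly C[n + 1]}, f = F \mPo zQ_tuple.
Proof.
move=> lt1n lt1a; pose i0 := Ordinal (ltnW lt1n); pose i1 := Ordinal lt1n.
have i0_a : (i0 < a)%N by exact: ltnW lt1a.
have dQ0_neq0 := dQ_neq0 b beta i0_a.
have [N] := ubnP (msize f); elim: N f => // N IHN f lt_fN f_par.
have [l f0E] := dQ_dvd (isT : i0 != i1) i0_a lt1a (f_par i0 i1).
have fE j : f^`M(zbv j) = l * dQ j.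
  by apply: (mulIf dQ0_neq0); rewrite f_par f0E mulrAC.
have l_par : dbar_parallel l.
  move=> j k; have := mderiv_comm (zbv j) (zbv k) f.
  by rewrite fE (fE k) !mderivM (mderiv_comm (zbv j) (zbv k) Q) => /addIr.
have [l0|l_neq0] := eqVneq l 0.
  by apply: comp_zQ_of_holomorphic => j; rewrite fE l0 mul0r.
have [|G lE] := IHN l _ l_par.
  have := msize_mderiv f (zbv i0); rewrite f0E msizeM //.
  have := msize_dQ_gt1 b beta i0_a; move: lt_fN.
  by move: (msize f) (msize l) (msize (dQ i0)) => sf sl sq; lia.
pose H := mantideriv svar G.
have [h fHE] : exists h, f - (H \mPo zQ_tuple) = h \mPo zQ_tuple.
  apply: comp_zQ_of_holomorphic => j.
  by rewrite mderivB mderiv_comp_zQ mantiderivK -lE fE subrr.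
by exists (H + h); rewrite comp_mpolyD -fHE addrC subrK.
Qed.

End CompZQ.

Definition zs_weight n (m : 'X_{1..n + 1}) : nat :=
  (\sum_(j < n) m (lshift 1 j) + 2 * m (rshift n ord0))%N.

Lemma zs_weight0 n : zs_weight (0%MM : 'X_{1..n + 1}) = 0%N.
Proof. by rewrite /zs_weight big1 // => *; rewrite mnm0E. Qed.

Lemma zs_weightD n : {morph @zs_weight n : m1 m2 / (m1 + m2)%MM >-> (m1 + m2)%N}.
Proof.
move=> m1 m2; rewrite /zs_weight mnmDE mulnDr.
under eq_bigr do rewrite mnmDE.
by rewrite big_split /= addnACA.
Qed.

HB.instance Definition _ n :=
  isMeasure.Build (n + 1) (@zs_weight n) (@zs_weight0 n) (@zs_weightD n).

Lemma weighted_homogP (R : realType) n d (F : {mpoly R[i][n + 1]}) :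
  F \is d.-homog for (@zs_weight n) -> weighted_homog d F.
Proof. exact: dhomog_mf. Qed.

Section Homogeneity.
Variables (R : realType) (n a b : nat) (beta : 'M[R[i]]_n).
Local Notation C := R[i].
Local Notation P := {mpoly C[n + n]}.
Local Notation Q := (Qpoly a b beta).
Local Notation T := (zQ_tuple a b beta).

Lemma Qpoly_homog : Q \is 2.-homog.
Proof.
have XX_homog (i j : 'I_(n + n)) : ('X_i * 'X_j : P) \is 2.-homog.
  by apply: (@dhomogM _ _ _ 1%N _ 1%N); rewrite dhomogX; apply/eqP; exact: mdeg1.
apply: rpredD; first apply: rpredD.
- by apply: rpredB; apply: rpred_sum => l _.
- by apply: rpred_sum => l _; apply: rpred_sum => m _; apply: rpredZ.
- by apply: rpred_sum => l _; apply: rpred_sum => m _; apply: rpredZ.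
Qed.

Lemma comp_zQ_homog d (F : {mpoly C[n + 1]}) :
  F \is d.-homog for (@zs_weight n) -> F \mPo T \is d.-homog.
Proof.
move=> /dhomogP F_hom; rewrite [F]mpolyE raddf_sum /= big_seq; apply: rpred_sum => m m_supp.
rewrite comp_mpolyZ; apply: rpredZ; rewrite comp_mpolyX -(F_hom m m_supp) /= /zs_weight.
have -> : (\sum_(j < n) m (lshift 1 j) + 2 * m (rshift n ord0))%N =
    (\sum_(i < n + 1) (if split i is inl _ then 1 else 2) * m i)%N.
  rewrite big_split_ord /= big_ord1 split_rshift.
  by congr (_ + _)%N; apply: eq_bigr => l _; rewrite split_lshift mul1n.
elim/big_rec2: _ => [|i e p _ p_hom]; first exact: dhomog1.
apply: dhomogM p_hom; apply: dhomogMn.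
case: (split_ordP i) => [j|o] ->; rewrite ?split_lshift ?split_rshift.
  by rewrite zQ_tuple_z dhomogX; apply/eqP; exact: mdeg1.
by rewrite zQ_tuple_s Qpoly_homog.
Qed.

Lemma comp_zQ_pihomog d (F : {mpoly C[n + 1]}) : F \mPo T \is d.-homog ->
  F \mPo T = pihomog (@zs_weight n) d F \mPo T.
Proof.
move=> FT_hom; pose K := maxn (mmeasure (@zs_weight n) F) d.+1.
have lt_dK : (d < K)%N by rewrite leq_max ltnSn orbT.
have comp_pihomog e : pihomog (@zs_weight n) e F \mPo T \is e.-homog.
  exact/comp_zQ_homog/pihomogP.
rewrite -(pihomog_dE FT_hom).
have -> : F \mPo T = \sum_(e < K) (pihomog (@zs_weight n) e F \mPo T).
  by rewrite {1}(pihomog_partitionE (leq_maxl (mmeasure (@zs_weight n) F) d.+1)) raddf_sum.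
rewrite raddf_sum (bigD1 (Ordinal lt_dK)) //= big1 ?addr0 => [|e ne_ed].
  exact: pihomog_dE (comp_pihomog d).
by apply: (pihomog_ne0 _ (comp_pihomog e)); apply: contra ne_ed => /eqP e_d; apply/eqP/val_inj.
Qed.

End Homogeneity.

Theorem lemma6p1 (R : realType) (n a b : nat) (beta : 'M[R[i]]_n)
  (f : {mpoly R[i][n + n]}) :
  (2 <= n)%N -> (2 <= a)%N -> (a + b <= n)%N ->
  nondegenerate_Q a b beta ->
  CR_on_MCR a b beta f ->
  exists F : {mpoly R[i][n + 1]},
    (forall z : 'rV[R[i]]_n, f.@[zzbar z] = F.@[zQ a b beta z]) /\
    (forall d : nat, f \is d.-homog -> weighted_homog d F).
Proof.
move=> le2n le2a _ _ f_CR.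
have f_par : dbar_parallel a b beta f.
  move=> j k; apply/eqP; rewrite -subr_eq0; apply/eqP; apply: mpoly_zzbar_eq0 => z.
  exact: CR_on_MCR_cross.
have [F0 fE] := comp_zQ_of_dbar_parallel le2n le2a f_par.
have [->|f_neq0] := eqVneq f 0.
  by exists 0; split => [z|d _ m]; rewrite ?msupp0 ?meval0.
have [/homogP[d f_hom]|f_nhom] := boolP (f \is homog mdeg); last first.
  exists F0; split => [z|d f_hom]; first by rewrite fE meval_comp_zQ.
  by case/negP: f_nhom; apply/homogP; exists d.
exists (pihomog (@zs_weight n) d F0); split => [z|e f_hom'].
  by rewrite -meval_comp_zQ -comp_zQ_pihomog -fE.
by rewrite (dhomog_uniq f_neq0 f_hom' f_hom); apply/weighted_homogP/pihomogP.
Qed.
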